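(* Let $\alpha\in\mathbb C$, $k\in\mathbb N$, $P_k:=\mathbb C[\rho,\varepsilon]/(\varepsilon^k)$, and define $T_{(\alpha,k)}:R\to P_k$ by $T_{(\alpha,k)}(f)=\sum_{i=0}^{k-1}f^{(i)}_\alpha\,\frac{\varepsilon^i}{i!}$. Then: (1) $T_{(\alpha,k)}$ is a $\mathbb C$-algebra homomorphism and $\ker T_{(\alpha,k)}=(l_\alpha^k)$; (2) the induced injective algebra homomorphism $\tau:R/(l_\alpha^k)\to P_k$ induces an isomorphism between the total rings of fractions of $R/(l_\alpha^k)$ and of $P_k$.
   Context: $R=\mathbb C[z_1,z_2]$, identified via polar coordinates $z_1=\rho\cos\varphi$, $z_2=\rho\sin\varphi$ with the subalgebra $\mathbb C[\rho\cos\varphi,\rho\sin\varphi]$ of analytic functions in $(\rho,\varphi)\in\mathbb C^2$. For $f\in R$, $\alpha\in\mathbb C$, $i\in\mathbb N_0$, let $f^{(i)}_\alpha:=\frac{\partial^i f}{\partial\varphi^i}\big|_{\varphi=\alpha}\in\mathbb C[\rho]$. Put $l_\alpha=-\sin(\alpha)z_1+\cos(\alpha)z_2=\rho\sin(\varphi-\alpha)$. *)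

From HB Require Import structures.
From mathcomp Require Import all_boot all_order all_algebra.
From mathcomp Require Import reals.
From mathcomp.real_closed Require Import complex.
From mathcomp Require Import mpoly.

Set Implicit Arguments.
Unset Strict Implicit.
Unset Printing Implicit Defensive.

Import GRing.Theory.
Local Open Scope ring_scope.

Section Defs.
Variable R : realType.
Local Notation C := (R[i]).

Definition Rpol := {mpoly C[2]}.
Definition z1 : Rpol := 'X_(ord0 : 'I_2).
Definition z2 : Rpol := 'X_(ord_max : 'I_2).

(* The derivation d/dphi on C[rho cos phi, rho sin phi] = C[z1, z2]:
   by the chain rule, d/dphi f(rho cos phi, rho sin phi)
     = - (rho sin phi) * (d_1 f) + (rho cos phi) * (d_2 f),
   i.e. dphi f = - z2 * df/dz1 + z1 * df/dz2 (again an element of C[z1,z2]). *)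
Definition dphi (f : Rpol) : Rpol :=
  - z2 * mderiv (ord0 : 'I_2) f + z1 * mderiv (ord_max : 'I_2) f.

(* Evaluation at phi = alpha, where (c, s) = (cos alpha, sin alpha):
   z1 = rho cos phi |-> c * rho,  z2 = rho sin phi |-> s * rho,
   giving an element of C[rho] = {poly C}. *)
Definition eval_phi (c s : C) (f : Rpol) : {poly C} :=
  mmap (@polyC C) (fun i : 'I_2 => if val i == 0%N then c *: 'X else s *: 'X) f.

Definition fder (c s : C) (i : nat) (f : Rpol) : {poly C} :=
  eval_phi c s (iter i dphi f).

(* l_alpha = - sin(alpha) z1 + cos(alpha) z2 = rho sin(phi - alpha). *)
Definition lalpha (c s : C) : Rpol := - (s *: z1) + c *: z2.

(* P_k = C[rho, eps]/(eps^k) = C[rho][eps]/(eps^k) : the outer polynomial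
   variable 'X is eps, the coefficients are in C[rho]. *)
Definition Pk (k : nat) := {poly %/ ('X^k : {poly {poly C}})}.

Definition Tak (c s : C) (k : nat) (f : Rpol) : Pk k :=
  in_qpoly ('X^k : {poly {poly C}})
    (\sum_(i < k) ((i`!%:R : C)^-1 *: fder c s i f)%:P * 'X^i).

End Defs.

Section Frac.
Variables (A B : comNzRingType).

Definition nzdiv (b : B) : Prop := forall x : B, x * b = 0 -> x = 0.

(* The class of s is a non-zero-divisor in A/(g). *)
Definition nzdiv_mod (g s : A) : Prop :=
  forall x : A, (exists q, x * s = q * g) -> exists q, x = q * g.

(* Let tau : A/(g) -> B be induced by tau0 : A -> B (which vanishes on (g)).
   tau induces an isomorphism of total rings of fractions
   Q(A/(g)) -> Q(B), a/s |-> tau(a)/tau(s), meaning: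
   (i)  tau maps non-zero-divisors to non-zero-divisors (so the map
        a/s |-> tau(a)/tau(s) is defined);
   (ii) it is injective: tau(a)/tau(s) = tau(a')/tau(s') implies
        a/s = a'/s' in Q(A/(g)), i.e. a s' = a' s mod (g);
   (iii) it is surjective: every b/t (t a non-zero-divisor of B) equals
        tau(a)/tau(s) for some a and non-zero-divisor s of A/(g).
   (It is automatically a ring homomorphism.) *)
Definition induces_frac_iso (g : A) (tau0 : A -> B) : Prop :=
  [/\ (forall s, nzdiv_mod g s -> nzdiv (tau0 s)),
      (forall a s a' s', nzdiv_mod g s -> nzdiv_mod g s' ->
          tau0 a * tau0 s' = tau0 a' * tau0 s ->
          exists q, a * s' - a' * s = q * g)
    & (forall b t : B, nzdiv t ->
          exists a s, nzdiv_mod g s /\ b * tau0 s = t * tau0 a)].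

End Frac.

From HB Require Import structures.
From mathcomp Require Import all_boot all_order all_algebra.
From mathcomp Require Import reals.
From mathcomp.real_closed Require Import complex.
From mathcomp Require Import mpoly.
From mathcomp Require Import ring zify.
Import GRing.Theory Num.Theory.
Set Implicit Arguments.
Unset Strict Implicit.
Unset Printing Implicit Defensive.
Local Open Scope ring_scope.

(* Put u = rho cos(phi - alpha) = c z1 + s z2 next to l = rho sin(phi - alpha).
   The angular derivation d/dphi maps l to u, while evaluation at phi = alpha kills l
   and sends u to rho.  The coefficients f^(i)_alpha / i! of T f are the values at
   phi = alpha of the divided powers (d/dphi)^i f / i!, which obey the Leibniz rule;
   hence T is a ring homomorphism, and T l = rho eps + O(eps^2).
   Modulo l every polynomial is a polynomial in u, so the kernel of the evaluation is
   (l).  As the eps^j-coefficient of T (l^j g) is rho^j g_alpha, peeling off one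
   factor of l at a time gives ker T = (l^k); likewise s is a non-zero-divisor
   modulo l^k iff s_alpha <> 0, and then T s has a nonzero constant term, hence is a
   non-zero-divisor of P_k.  Finally every p in P_k is a fraction T a / T s with
   s_alpha <> 0: if p vanishes below eps^j, subtracting T (l^j g) / T (u^j) with
   g_alpha = p_j raises the order of vanishing, and induction on it concludes. *)

Section TruncatedPolynomials.
Variables (K : comNzRingType) (k : nat).
Hypothesis k_gt0 : (0 < k)%N.
Local Notation Q := {poly %/ ('X^k : {poly K})}.

Lemma coef_in_qpolyXn (p : {poly K}) n :
  (in_qpoly 'X^k p : Q)`_n = if (n < k)%N then p`_n else 0.
Proof.
by rewrite /= mk_monic_Xn prednK // -Pdiv.RingMonic.take_poly_rmodp coef_take_poly.
Qed.

Lemma big_coef_qpolyXn (x : Q) n : (k <= n)%N -> x`_n = 0.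
Proof. by move=> kn; apply: big_coef_npoly; rewrite mk_monic_Xn size_polyXn prednK. Qed.

Lemma qpolyXnP (x y : Q) : (forall n, (n < k)%N -> x`_n = y`_n) -> x = y.
Proof.
move=> eq_xy; apply/val_inj/polyP => n /=.
by case: (ltnP n k) => [/eq_xy //|kn]; rewrite !big_coef_qpolyXn.
Qed.

Lemma coef_qpolyXnB (x y : Q) n : (x - y)`_n = x`_n - y`_n.
Proof. exact: coefB. Qed.

Lemma coef_qpolyXn1 n : (1 : Q)`_n = (n == 0)%:R.
Proof.
rewrite -(in_qpoly1 'X^k) coef_in_qpolyXn coefC.
by case: n => [|n]; rewrite ?k_gt0 ?if_same.
Qed.

Lemma coef_qpolyXnM (x y : Q) n :
  (x * y)`_n = if (n < k)%N then \sum_(i < n.+1) x`_i * y`_(n - i) else 0.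
Proof. by rewrite -coefM -coef_in_qpolyXn. Qed.

Lemma coef0_qpolyXnM (x y : Q) : (x * y)`_0 = x`_0 * y`_0.
Proof. by rewrite coef_qpolyXnM k_gt0 big_ord1. Qed.

Definition vanish_below (j : nat) (x : Q) := forall n, (n < j)%N -> x`_n = 0.

Lemma vanish_below_k (x : Q) : vanish_below k x -> x = 0.
Proof. by move=> x0; apply: qpolyXnP => n lt_nk; rewrite x0 // coef0. Qed.

Lemma vanish_belowM (x y : Q) j m :
  vanish_below j x -> vanish_below m y -> vanish_below (j + m) (x * y).
Proof.
move=> x0 y0 n lt_n_jm; rewrite coef_qpolyXnM; case: ifP => // _.
apply: big1 => i _; case: (ltnP i j) => [ij|ji]; first by rewrite x0 ?mul0r.
by rewrite y0 ?mulr0 //; have := ltn_ord i; lia.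
Qed.

Lemma coef_vanish_belowM (x y : Q) j m :
    vanish_below j x -> vanish_below m y -> (j + m < k)%N ->
  (x * y)`_(j + m) = x`_j * y`_m.
Proof.
move=> x0 y0 lt_jm_k; rewrite coef_qpolyXnM lt_jm_k.
have lt_j_jm : (j < (j + m).+1)%N by lia.
rewrite (bigD1 (Ordinal lt_j_jm)) //= addKn big1 ?addr0 // => i /eqP neq_ij.
case: (ltngtP i j) => [ij|ji|eq_ij]; last by case: neq_ij; apply: val_inj.
  by rewrite x0 ?mul0r.
by rewrite y0 ?mulr0 //; have := ltn_ord i; lia.
Qed.

Lemma vanish_belowMr (x y : Q) j : vanish_below j x -> vanish_below j (x * y).
Proof.
move=> x0; have y0 : vanish_below 0 y by [].
by have := vanish_belowM x0 y0; rewrite addn0.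
Qed.

Lemma coef_vanish_belowMr (x y : Q) j :
  vanish_below j x -> (j < k)%N -> (x * y)`_j = x`_j * y`_0.
Proof.
move=> x0; have y0 : vanish_below 0 y by [].
by have := coef_vanish_belowM x0 y0; rewrite addn0.
Qed.

Lemma vanish_below1X (x : Q) m : vanish_below 1 x -> vanish_below m (x ^+ m).
Proof.
move=> x0; elim: m => [//|m IHm].
by rewrite exprSr -addn1; exact: vanish_belowM.
Qed.

Lemma coef_vanish_below1X (x : Q) m :
  vanish_below 1 x -> (m < k)%N -> (x ^+ m)`_m = x`_1 ^+ m.
Proof.
move=> x0; elim: m => [_|m IHm lt_m1_k]; first by rewrite !expr0 coef_qpolyXn1.
rewrite !exprSr -addn1 coef_vanish_belowM ?addn1 ?IHm //; last exact: vanish_below1X.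
exact: ltnW.
Qed.

Lemma nzdiv_coef0_qpolyXn (t : Q) : nzdiv t -> t`_0 != 0.
Proof.
move=> t_nzdiv; apply/eqP => t0_eq0.
pose x : Q := in_qpoly 'X^k 'X^(k.-1).
have x0 : vanish_below k.-1 x.
  by move=> n lt_n_k1; rewrite coef_in_qpolyXn coefXn ltn_eqF ?if_same.
have t0 : vanish_below 1 t by case.
have /t_nzdiv/(congr1 (fun z : Q => z`_k.-1)) : x * t = 0.
  by apply/vanish_below_k; have := vanish_belowM x0 t0; rewrite addn1 prednK.
rewrite coef_in_qpolyXn coefXn eqxx coef0 => /eqP.
by rewrite ltn_predL k_gt0 oner_eq0.
Qed.

End TruncatedPolynomials.

Section TruncatedPolynomialsDomain.
Variables (K : idomainType) (k : nat).
Hypothesis k_gt0 : (0 < k)%N.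
Local Notation Q := {poly %/ ('X^k : {poly K})}.

Lemma coef0_nzdiv_qpolyXn (t : Q) : t`_0 != 0 -> nzdiv t.
Proof.
move=> t0 x xt0; apply: (vanish_below_k k_gt0).
suff: forall j, (j <= k)%N -> vanish_below j x by apply.
elim=> [_ n //|j IHj lt_jk]; have x0 := IHj (ltnW lt_jk).
move=> n; rewrite ltnS leq_eqVlt => /orP[/eqP->|]; last exact: x0.
have := coef_vanish_belowMr k_gt0 t x0 lt_jk; rewrite xt0 coef0 => /esym/eqP.
by rewrite mulf_eq0 (negbTE t0) orbF => /eqP.
Qed.

End TruncatedPolynomialsDomain.

Section HasseDerivatives.
Variables (F : numFieldType) (A : algType F) (D : {linear A -> A}).
Hypothesis D_mul : forall f g, D (f * g) = D f * g + f * D g.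

Definition hasse (n : nat) (f : A) : A := (n`!%:R : F)^-1 *: iter n D f.

Lemma hasse0 f : hasse 0 f = f.
Proof. by rewrite /hasse fact0 invr1 scale1r. Qed.

Lemma D_hasse n f : D (hasse n f) = n.+1%:R *: hasse n.+1 f.
Proof.
rewrite /hasse linearZ /= scalerA factS natrM invfM mulrA mulfV ?mul1r //.
by rewrite pnatr_eq0.
Qed.

Lemma hasse_is_linear n : linear (hasse n).
Proof.
move=> a f g; rewrite /hasse scalerA mulrC -scalerA -scalerDr; congr (_ *: _).
by elim: n => //= n ->; rewrite linearP.
Qed.

HB.instance Definition _ n :=
  GRing.isLinear.Build F A A _ (hasse n) (hasse_is_linear n).

Lemma derivation1 : D 1 = 0.
Proof.
have := D_mul 1 1; rewrite !mul1r mulr1 => /(congr1 (fun x => x - D 1)).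
by rewrite subrr addrK => ->.
Qed.

Lemma hasse1 f : hasse 1 f = D f.
Proof. by rewrite /hasse /= invr1 scale1r. Qed.

Lemma hasse_one n : hasse n 1 = (n == 0)%:R.
Proof.
case: n => [|n]; first exact: hasse0.
by rewrite /hasse iterSr derivation1 iter_fix ?linear0 ?scaler0.
Qed.

Lemma hasseM n f g : hasse n (f * g) = \sum_(i < n.+1) hasse i f * hasse (n - i) g.
Proof.
elim: n => [|n IHn]; first by rewrite big_ord1 !hasse0.
apply: (@scalerI _ _ (n.+1%:R : F)); first by rewrite pnatr_eq0.
rewrite -D_hasse IHn linear_sum /= scaler_sumr.
have D_term (i : 'I_n.+1) : D (hasse i f * hasse (n - i) g) =
    i.+1%:R *: (hasse i.+1 f * hasse (n - i) g)
    + (n.+1 - i)%:R *: (hasse i f * hasse (n.+1 - i) g).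
  by rewrite D_mul !D_hasse scalerAl scalerAr subSn // -ltnS.
have split_term (i : 'I_n.+2) : n.+1%:R *: (hasse i f * hasse (n.+1 - i) g) =
    i%:R *: (hasse i f * hasse (n.+1 - i) g)
    + (n.+1 - i)%:R *: (hasse i f * hasse (n.+1 - i) g).
  by rewrite -scalerDl -natrD subnKC // -ltnS.
rewrite (eq_bigr _ (fun i _ => D_term i)) (eq_bigr _ (fun i _ => split_term i)).
rewrite !big_split /=; congr (_ + _).
  by rewrite [in RHS]big_ord_recl scale0r add0r.
by rewrite [in RHS]big_ord_recr /= subnn scale0r addr0.
Qed.

End HasseDerivatives.

Section AngularDerivative.
Variable R : realType.
Local Notation C := R[i].
Local Notation A := (Rpol R).

Lemma dphi_is_linear : linear (@dphi R).
Proof. by move=> a f g; rewrite /dphi !linearP /= !mulrDr scalerDr !scalerAr; ring. Qed.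

HB.instance Definition _ :=
  GRing.isLinear.Build C A A _ (@dphi R) dphi_is_linear.

Lemma dphiM (f g : A) : dphi (f * g) = dphi f * g + f * dphi g.
Proof. by rewrite /dphi !mderivM; ring. Qed.

Lemma mderivXU (i j : 'I_2) : mderiv i ('X_j : A) = (j == i)%:R.
Proof.
rewrite mderivX mnm1E; case: eqP => [->|_]; last by rewrite scale0r.
by rewrite -{1}[U_(i)%MM]add0m addmK mpolyX0 scale1r.
Qed.

Lemma dphi_z1 : dphi (z1 R) = - z2 R.
Proof. by rewrite /dphi /z1 !mderivXU /= mulr1 mulr0 addr0. Qed.

Lemma dphi_z2 : dphi (z2 R) = z1 R.
Proof. by rewrite /dphi /z2 !mderivXU /= mulr1 mulr0 add0r. Qed.

Variables c s : C.

Fact eval_phi_is_zmod_morphism : zmod_morphism (eval_phi c s).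
Proof. exact: raddfB. Qed.

Fact eval_phi_is_monoid_morphism : monoid_morphism (eval_phi c s).
Proof. by split; [exact: rmorph1 | exact: rmorphM]. Qed.

Fact eval_phi_is_scalable : scalable (eval_phi c s).
Proof. by move=> a f; rewrite /eval_phi mmapZ mul_polyC. Qed.

HB.instance Definition _ := GRing.isZmodMorphism.Build A {poly C} (eval_phi c s)
  eval_phi_is_zmod_morphism.
HB.instance Definition _ := GRing.isMonoidMorphism.Build A {poly C} (eval_phi c s)
  eval_phi_is_monoid_morphism.
HB.instance Definition _ := GRing.isScalable.Build C A {poly C} *:%R (eval_phi c s)
  eval_phi_is_scalable.

Lemma eval_phiC (a : C) : eval_phi c s a%:MP = a%:P.
Proof. exact: mmapC. Qed.

Lemma eval_phi_z1 : eval_phi c s (z1 R) = c *: 'X.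
Proof. by rewrite /eval_phi /z1 mmapX mmap1U. Qed.

Lemma eval_phi_z2 : eval_phi c s (z2 R) = s *: 'X.
Proof. by rewrite /eval_phi /z2 mmapX mmap1U. Qed.

Definition ualpha : A := c *: z1 R + s *: z2 R.

Lemma dphi_lalpha : dphi (lalpha c s) = ualpha.
Proof.
by rewrite /lalpha linearD linearN !linearZ /= dphi_z1 dphi_z2 [X in s *: X]opprK addrC.
Qed.

Lemma eval_phi_lalpha : eval_phi c s (lalpha c s) = 0.
Proof.
rewrite /lalpha rmorphD rmorphN /= !linearZ /= eval_phi_z1 eval_phi_z2.
by rewrite scalerN !scalerA mulrC addNr.
Qed.

Hypothesis cs1 : c ^+ 2 + s ^+ 2 = 1.

Lemma eval_phi_ualpha : eval_phi c s ualpha = 'X.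
Proof.
rewrite rmorphD /= !linearZ /= eval_phi_z1 eval_phi_z2.
by rewrite !scalerA -scalerDl -!expr2 cs1 scale1r.
Qed.

Lemma lalpha_neq0 : lalpha c s != 0.
Proof.
apply: contraTneq isT => l0; have := eval_phi_ualpha.
by rewrite -dphi_lalpha l0 linear0 rmorph0 => /eqP; rewrite eq_sym polyX_eq0.
Qed.

End AngularDerivative.

Section KernelEvaluation.
Variables (R : realType) (c s : R[i]).
Hypothesis cs1 : c ^+ 2 + s ^+ 2 = 1.
Local Notation A := (Rpol R).
Local Notation ev := (eval_phi c s).
Local Notation l := (lalpha c s).
Local Notation u := (ualpha c s).

Fact ualpha_comm : commr_rmorph (@mpolyC 2 R[i]) u.
Proof. by move=> a; exact: mulrC. Qed.

Local Notation subst_u := (horner_morph ualpha_comm).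

Lemma eval_phi_subst_u r : ev (subst_u r) = r.
Proof.
elim/poly_ind: r => [|r a IHr]; first by rewrite !rmorph0.
rewrite rmorphD rmorphM /= horner_morphX horner_morphC.
by rewrite rmorphD rmorphM /= IHr eval_phi_ualpha // eval_phiC.
Qed.

Lemma subst_u_mod_lalpha f : exists r h, f = subst_u r + l * h.
Proof.
pose P g := exists r h, g = subst_u r + l * h.
have PD p q : P p -> P q -> P (p + q).
  by move=> [r [h ->]] [r' [h' ->]]; exists (r + r'), (h + h'); rewrite rmorphD /=; ring.
have PM p q : P p -> P q -> P (p * q).
  move=> [r [h ->]] [r' [h' ->]].
  exists (r * r'), (h * subst_u r' + subst_u r * h' + l * h * h').
  by rewrite rmorphM /=; ring.
have PC a : P a%:MP by exists a%:P, 0; rewrite horner_morphC mulr0 addr0.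
have PX p n : P p -> P (p ^+ n).
  by move=> Pp; elim: n => [|n IHn]; [rewrite expr0 -mpolyC1 | rewrite exprS; exact: PM].
have cs1_mpoly : (c%:MP ^+ 2 + s%:MP ^+ 2 : A) = 1 by rewrite -!rmorphXn -rmorphD /= cs1.
(* z1 = c u - s l and z2 = s u + c l, because c^2 + s^2 = 1. *)
have Pz1 : P (z1 R).
  exists (c%:P * 'X), (- s%:MP).
  rewrite rmorphM /= horner_morphC horner_morphX /ualpha /lalpha -!mul_mpolyC.
  by rewrite -[z1 R in LHS]mul1r -cs1_mpoly; ring.
have Pz2 : P (z2 R).
  exists (s%:P * 'X), c%:MP.
  rewrite rmorphM /= horner_morphC horner_morphX /ualpha /lalpha -!mul_mpolyC.
  by rewrite -[z2 R in LHS]mul1r -cs1_mpoly; ring.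
elim/mpolyind: f => [|a m p _ _ Pp]; first by rewrite -mpolyC0; exact: PC.
apply: (PD _ _ _ Pp); rewrite -mul_mpolyC mpolyXE_id big_ord_recr big_ord1 /=.
by apply: (PM _ _ (PC a)); apply: PM; exact: PX.
Qed.

Lemma eval_phi_surj r : exists f, ev f = r.
Proof. by exists (subst_u r); exact: eval_phi_subst_u. Qed.

Lemma eval_phi_eq0 f : ev f = 0 -> exists h, f = l * h.
Proof.
have [r [h ->]] := subst_u_mod_lalpha f.
rewrite rmorphD rmorphM /= eval_phi_subst_u eval_phi_lalpha mul0r addr0 => ->.
by exists h; rewrite rmorph0 add0r.
Qed.

Lemma nzdiv_mod_lalphaXP m s0 : (0 < m)%N -> nzdiv_mod (l ^+ m) s0 <-> ev s0 != 0.
Proof.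
move=> m_gt0; split=> [s0_nzdiv | s0_neq0].
  apply: contraTneq isT => /eval_phi_eq0[h s0E].
  have [q lE] : exists q, l ^+ m.-1 = q * l ^+ m.
    apply: s0_nzdiv; exists h; rewrite s0E -[m in RHS]prednK // exprS.
    by move: (l ^+ m.-1) => L; ring.
  have : 1 = q * l.
    apply: (mulIf (expf_neq0 m.-1 (lalpha_neq0 cs1))).
    by rewrite mul1r {1}lE -mulrA -exprS prednK.
  move/(congr1 ev); rewrite rmorph1 rmorphM /= eval_phi_lalpha mulr0 => /eqP.
  by rewrite oner_eq0.
elim: m {m_gt0} => [|m IHm] x [q xs0E]; first by exists x; rewrite expr0 mulr1.
have /eval_phi_eq0[y xE] : ev x = 0.
  move/(congr1 ev): xs0E; rewrite exprS mulrCA !rmorphM /= eval_phi_lalpha mul0r.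
  by move=> /eqP; rewrite mulf_eq0 (negbTE s0_neq0) orbF => /eqP.
have [q' yE] : exists q', y = q' * l ^+ m.
  apply: IHm; exists q; apply: (mulfI (lalpha_neq0 cs1)).
  by rewrite mulrA -xE xs0E exprS; ring.
by exists q'; rewrite xE yE exprS; ring.
Qed.

End KernelEvaluation.

Section TaylorMap.
Variables (R : realType) (c s : R[i]) (k : nat).
Hypotheses (cs1 : c ^+ 2 + s ^+ 2 = 1) (k_gt0 : (0 < k)%N).
Local Notation A := (Rpol R).
Local Notation ev := (eval_phi c s).
Local Notation l := (lalpha c s).
Local Notation u := (ualpha c s).
Local Notation T := (Tak c s k).

Definition taylor_coef n (f : A) : {poly R[i]} := ev (@hasse R[i] _ (@dphi R) n f).

Lemma coef_Tak f n : (T f)`_n = if (n < k)%N then taylor_coef n f else 0.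
Proof.
rewrite /Tak.
have -> : \sum_(i < k) ((i`!%:R)^-1 *: fder c s i f)%:P * 'X^i =
          \poly_(i < k) taylor_coef i f.
  rewrite poly_def; apply: eq_bigr => i _.
  by rewrite mul_polyC /taylor_coef /hasse /fder linearZ.
by apply: (etrans (coef_in_qpolyXn k_gt0 _ n)); rewrite coef_poly; case: (n < k)%N.
Qed.

Lemma coef0_Tak f : (T f)`_0 = ev f.
Proof. by rewrite coef_Tak k_gt0 /taylor_coef hasse0. Qed.

Lemma taylor_coefM n f g :
  taylor_coef n (f * g) = \sum_(i < n.+1) taylor_coef i f * taylor_coef (n - i) g.
Proof.
rewrite /taylor_coef (@hasseM R[i] _ (@dphi R) (@dphiM R)).
by rewrite rmorph_sum; apply: eq_bigr => i _; rewrite rmorphM.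
Qed.

Lemma TakD f g : T (f + g) = T f + T g.
Proof.
apply: (qpolyXnP k_gt0) => n lt_nk.
by rewrite raddfD /= coefD !coef_Tak lt_nk /taylor_coef !linearD.
Qed.

Lemma TakB f g : T (f - g) = T f - T g.
Proof.
apply: (qpolyXnP k_gt0) => n lt_nk.
by rewrite coef_qpolyXnB !coef_Tak lt_nk /taylor_coef !linearB.
Qed.

Lemma TakZ a f : T (a *: f) = a%:P *: T f.
Proof.
apply: (qpolyXnP k_gt0) => n lt_nk.
rewrite poly_of_qpolyZ coefZ !coef_Tak lt_nk /taylor_coef.
by rewrite [X in ev X]linearZ /= linearZ /= mul_polyC.
Qed.

Lemma Tak1 : T 1 = 1.
Proof.
apply: (qpolyXnP k_gt0) => n lt_nk.
rewrite coef_qpolyXn1 // coef_Tak lt_nk /taylor_coef (hasse_one (@dphiM R)).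
by case: (n == 0%N); rewrite ?rmorph0 ?rmorph1.
Qed.

Lemma TakM f g : T (f * g) = T f * T g.
Proof.
apply: (qpolyXnP k_gt0) => n lt_nk.
rewrite coef_qpolyXnM // !coef_Tak lt_nk taylor_coefM.
apply: eq_bigr => i _; have le_in : (i <= n)%N by rewrite -ltnS.
by rewrite !coef_Tak (leq_ltn_trans le_in lt_nk) (leq_ltn_trans (leq_subr i n) lt_nk).
Qed.

Lemma TakX f m : T (f ^+ m) = T f ^+ m.
Proof. by elim: m => [|m IHm]; rewrite ?expr0 ?Tak1 // !exprS TakM IHm. Qed.

Lemma Tak_lalpha_vanish : vanish_below 1 (T l).
Proof. by case=> // _; rewrite coef0_Tak eval_phi_lalpha. Qed.

Lemma coef_Tak_lalphaX j : (j < k)%N -> (T (l ^+ j))`_j = 'X ^+ j.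
Proof.
case: j => [_|j lt_j1_k]; first by rewrite expr0 Tak1 coef_qpolyXn1.
rewrite TakX coef_vanish_below1X //; last exact: Tak_lalpha_vanish.
have lt_1k : (1 < k)%N by apply: leq_ltn_trans lt_j1_k.
by rewrite coef_Tak lt_1k /taylor_coef hasse1 /= dphi_lalpha eval_phi_ualpha.
Qed.

Lemma Tak_lalphaX_vanish j : vanish_below j (T (l ^+ j)).
Proof. by rewrite TakX; exact: vanish_below1X Tak_lalpha_vanish. Qed.

Lemma Tak_lalphaXk : T (l ^+ k) = 0.
Proof. by apply: (vanish_below_k k_gt0); exact: Tak_lalphaX_vanish. Qed.

Lemma Tak_lalphaXM_vanish j g : vanish_below j (T (l ^+ j * g)).
Proof. by rewrite TakM; apply: (vanish_belowMr k_gt0); exact: Tak_lalphaX_vanish. Qed.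

Lemma coef_Tak_lalphaXM j g : (j < k)%N -> (T (l ^+ j * g))`_j = 'X ^+ j * ev g.
Proof.
move=> lt_jk; rewrite TakM coef_vanish_belowMr ?coef_Tak_lalphaX ?coef0_Tak //.
exact: Tak_lalphaX_vanish.
Qed.

Lemma Tak_eq0 f : T f = 0 <-> exists q, f = q * l ^+ k.
Proof.
split=> [Tf0|[q ->]]; last by rewrite TakM Tak_lalphaXk mulr0.
suff /(_ k (leqnn k)) [q ->] : forall j, (j <= k)%N -> exists q, f = l ^+ j * q.
  by exists q; rewrite mulrC.
elim=> [_|j IHj lt_jk]; first by exists f; rewrite expr0 mul1r.
have [g fE] := IHj (ltnW lt_jk).
have /(eval_phi_eq0 cs1)[h gE] : ev g = 0.
  have := coef_Tak_lalphaXM g lt_jk; rewrite -fE Tf0 coef0 => /esym/eqP.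
  by rewrite mulf_eq0 expf_eq0 polyX_eq0 andbF => /eqP.
by exists h; rewrite fE gE exprSr mulrA.
Qed.

Lemma Tak_nzdiv s0 : ev s0 != 0 -> nzdiv (T s0).
Proof. by move=> s0_neq0; apply: coef0_nzdiv_qpolyXn; rewrite // coef0_Tak. Qed.

Lemma Tak_frac_vanish d j (p : Pk R k) : (j + d = k)%N -> vanish_below j p ->
  exists a s0, ev s0 != 0 /\ p * T s0 = T a.
Proof.
elim: d j p => [|d IHd] j p jdk p0.
  rewrite addn0 in jdk; subst j.
  have -> : p = 0 by exact: vanish_below_k p0.
  by exists (l ^+ k), 1; rewrite rmorph1 oner_neq0 mul0r Tak_lalphaXk.
have lt_jk : (j < k)%N by rewrite -jdk addnS ltnS leq_addr.
have [g gE] := eval_phi_surj cs1 p`_j.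
pose w := p * T (u ^+ j) - T (l ^+ j * g).
have w0 : vanish_below j.+1 w.
  move=> n; rewrite ltnS leq_eqVlt => /orP[/eqP-> | lt_nj].
    rewrite coef_qpolyXnB coef_vanish_belowMr //.
    by rewrite coef0_Tak rmorphXn /= eval_phi_ualpha // coef_Tak_lalphaXM // gE mulrC subrr.
  rewrite coef_qpolyXnB (Tak_lalphaXM_vanish g lt_nj).
  by rewrite (vanish_belowMr k_gt0 _ p0 lt_nj) subr0.
have [a2 [s2 [s2_neq0 w_frac]]] := IHd j.+1 w (etrans (addSnnS j d) jdk) w0.
exists (a2 + l ^+ j * g * s2), (u ^+ j * s2); split.
  by rewrite rmorphM rmorphXn /= eval_phi_ualpha // mulf_neq0 // expf_neq0 // polyX_eq0.
have wE : p * T (u ^+ j) = w + T (l ^+ j * g) by rewrite subrK.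
by rewrite TakM mulrA wE mulrDl w_frac TakD !TakM.
Qed.

Lemma Tak_frac (p : Pk R k) : exists a s0, ev s0 != 0 /\ p * T s0 = T a.
Proof. by have p0 : vanish_below 0 p by []; exact: Tak_frac_vanish (add0n k) p0. Qed.

End TaylorMap.

Theorem lemma2p11 (R : realType) (c s : R[i]) (k : nat) :
  c ^+ 2 + s ^+ 2 = 1 -> (0 < k)%N ->
  (* (1) T_(alpha,k) is a C-algebra homomorphism R -> P_k ... *)
  ((forall f g : Rpol R, Tak c s k (f + g) = Tak c s k f + Tak c s k g) /\
   (forall f g : Rpol R, Tak c s k (f * g) = Tak c s k f * Tak c s k g) /\
   Tak c s k 1 = 1 /\
   (forall (a : R[i]) (f : Rpol R), Tak c s k (a *: f) = a%:P *: Tak c s k f) /\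
  (* ... with kernel the ideal (l_alpha^k) *)
   (forall f : Rpol R,
      Tak c s k f = 0 <-> exists q : Rpol R, f = q * lalpha c s ^+ k)) /\
  (* (2) the induced tau : R/(l_alpha^k) -> P_k induces an isomorphism of
         the total rings of fractions *)
  induces_frac_iso (lalpha c s ^+ k) (Tak c s k).
Proof.
move=> cs1 k_gt0; split.
  split; first exact: TakD.
  split; first exact: TakM.
  split; first exact: Tak1.
  split; first exact: TakZ.
  exact: Tak_eq0.
split.
- by move=> s0 /(nzdiv_mod_lalphaXP cs1 _ k_gt0); exact: Tak_nzdiv.
- move=> a s0 a' s0' _ _ eq_frac; apply/(Tak_eq0 cs1 k_gt0).
  by rewrite TakB // !TakM // eq_frac subrr.
- move=> b t t_nzdiv.
  have [a1 [s1 [s1_neq0 b_frac]]] := Tak_frac cs1 k_gt0 b.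
  have [a2 [s2 [s2_neq0 t_frac]]] := Tak_frac cs1 k_gt0 t.
  have a2_neq0 : eval_phi c s a2 != 0.
    rewrite -(coef0_Tak _ _ k_gt0) -t_frac coef0_qpolyXnM // coef0_Tak //.
    by rewrite mulf_neq0 // nzdiv_coef0_qpolyXn.
  exists (a1 * s2), (s1 * a2); split.
    by apply/(nzdiv_mod_lalphaXP cs1 _ k_gt0); rewrite rmorphM mulf_neq0.
  by rewrite !TakM // mulrA b_frac -t_frac mulrCA.
Qed.
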